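(* Let $M\ge1$ be an integer, $\lambda>1$, $0\le\varepsilon<\lambda-1$. Let $1\ne u\in F_N$ be such that the orbit ${\rm Out}(F_N)[u]$ contains an $(M,\lambda,\varepsilon)$-minimal conjugacy class. Then every $[u']\in\mathcal M([u])$ is $(M,\lambda,\varepsilon)$-minimal.
   Context: $F_N=F(A)$ is free of rank $N\ge2$ with free basis $A$; $\|g\|_A$ is the cyclically reduced length of $g$ (depends only on $[g]$); ${\rm Out}(F_N)$ acts on conjugacy classes. A class $[w]$ is ${\rm Out}(F_N)$-minimal if $\|w\|_A\le\|\varphi(w)\|_A$ for all $\varphi\in{\rm Out}(F_N)$; $\mathcal M([w])$ is the set of ${\rm Out}(F_N)$-minimal classes in ${\rm Out}(F_N)[w]$. For an integer $M\ge1$, $\lambda>1$, $0\le\varepsilon<\lambda-1$: a finite set $S$ of conjugacy classes of nontrivial elements is $(M,\lambda,\varepsilon)$-minimizing if (1) $\#S\le M$; (2) all elements of $S$ lie in one ${\rm Out}(F_N)$-orbit; (3) for all $[u],[u']\in S$, $1-\varepsilon\le\|u'\|_A/\|u\|_A\le1+\varepsilon$; (4) for every $[u]\in S$ and every $\varphi\in{\rm Out}(F_N)$ with $\varphi([u])\notin S$, $\|\varphi(u)\|_A/\|u\|_A\ge\lambda$. A nontrivial class $[u]$ is $(M,\lambda,\varepsilon)$-minimal if it belongs to some $(M,\lambda,\varepsilon)$-minimizing set. *)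

(* Concrete model of the free group F_N with free basis
   A = {a_0, ..., a_{N-1}}: elements are words over letters (i, b) with
   i < N, b = true meaning a_i and b = false meaning a_i^{-1}; two words
   represent the same element iff they have the same free reduction. *)
From Stdlib Require Import Reals List Arith Bool.
Import ListNotations.
Open Scope R_scope.

Definition letter := (nat * bool)%type.
Definition word := list letter.

Definition letter_eqb (x y : letter) : bool :=
  Nat.eqb (fst x) (fst y) && Bool.eqb (snd x) (snd y).

Definition inv_letter (x : letter) : letter := (fst x, negb (snd x)).

Definition winv (w : word) : word := rev (map inv_letter w).

Fixpoint red (w : word) : word :=
  match w with
  | [] => []
  | x :: w' =>
      match red w' with
      | y :: r => if letter_eqb y (inv_letter x) then r else x :: y :: r
      | [] => [x]
      end
  end.

Definition valid (N : nat) (w : word) : Prop :=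
  forall x, In x w -> (fst x < N)%nat.

Definition nontrivial (w : word) : Prop := red w <> [].

Fixpoint cred_aux (fuel : nat) (w : word) : word :=
  match fuel with
  | O => w
  | S f =>
      match w with
      | x :: ((_ :: _) as w') =>
          if letter_eqb (last w' x) (inv_letter x)
          then cred_aux f (removelast w')
          else w
      | _ => w
      end
  end.

Definition cyc_reduce (w : word) : word :=
  cred_aux (length (red w)) (red w).

Definition cyc_len (w : word) : nat := length (cyc_reduce w).

Definition conjugate (N : nat) (u v : word) : Prop :=
  exists g : word, valid N g /\ red (g ++ u ++ winv g) = red v.

Definition apply_endo (phi : nat -> word) (w : word) : word :=
  flat_map (fun x : letter => if snd x then phi (fst x) else winv (phi (fst x))) w.

Definition endo (N : nat) (phi : nat -> word) : Prop :=
  forall i, (i < N)%nat -> valid N (phi i).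

Definition is_aut (N : nat) (phi : nat -> word) : Prop :=
  endo N phi /\
  exists psi : nat -> word, endo N psi /\
    (forall i, (i < N)%nat -> red (apply_endo psi (phi i)) = [(i, true)]) /\
    (forall i, (i < N)%nat -> red (apply_endo phi (psi i)) = [(i, true)]).

(* [v] lies in the Out(F_N)-orbit of [u]. Inner automorphisms act trivially
   on conjugacy classes, so the Out-action on classes is computed via Aut. *)
Definition in_orbit (N : nat) (v u : word) : Prop :=
  valid N v /\ exists phi : nat -> word, is_aut N phi /\ conjugate N v (apply_endo phi u).

Definition out_minimal (N : nat) (w : word) : Prop :=
  forall phi, is_aut N phi -> (cyc_len w <= cyc_len (apply_endo phi w))%nat.

Definition class_in (N : nat) (v : word) (S : list word) : Prop :=
  exists s : word, In s S /\ conjugate N v s.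

Definition ratio (a b : word) : R := INR (cyc_len a) / INR (cyc_len b).

(* S (a finite list of representatives, so #S <= length S) is
   (M, lambda, eps)-minimizing *)
Definition minimizing (N M : nat) (lam eps : R) (S : list word) : Prop :=
  (length S <= M)%nat /\
  (forall u, In u S -> valid N u /\ nontrivial u) /\
  (forall u u', In u S -> In u' S -> in_orbit N u' u) /\
  (forall u u', In u S -> In u' S ->
     1 - eps <= ratio u' u /\ ratio u' u <= 1 + eps) /\
  (forall u phi, In u S -> is_aut N phi ->
     ~ class_in N (apply_endo phi u) S ->
     ratio (apply_endo phi u) u >= lam).

Definition MLE_minimal (N M : nat) (lam eps : R) (u : word) : Prop :=
  nontrivial u /\ exists S : list word, minimizing N M lam eps S /\ class_in N u S.

(* Let S be an (M, lambda, eps)-minimizing set containing a class [s] of the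
   Out(F_N)-orbit of [u], and let [u'] be an Out(F_N)-minimal class of the same
   orbit.  Then [u'] = [theta(s)] for some automorphism theta.  If [theta(s)]
   were outside S, condition (4) would give ||u'|| >= lambda ||s|| > ||s||,
   while Out-minimality of [u'] applied to theta^-1 gives ||u'|| <= ||s||.
   Hence [u'] lies in S, i.e. it is (M, lambda, eps)-minimal.

   Folding the conjugator into an inner automorphism,
   [u'] = [theta(s)] is sharpened to red(theta'(s)) = red(u'), so cyclic
   lengths coincide on the nose; the theorem then follows from the length
   comparison above. *)

From Stdlib Require Import Reals List.
From Stdlib Require Import Lia Lra Bool Classical.
Import ListNotations.
Open Scope R_scope.

Lemma letter_eqbP (x y : letter) : reflect (x = y) (letter_eqb x y).
Proof.
  destruct x as [i b], y as [j c]; unfold letter_eqb; simpl.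
  destruct (Nat.eqb_spec i j); destruct b, c; simpl; constructor; congruence.
Qed.

Lemma inv_letter_involutive (x : letter) : inv_letter (inv_letter x) = x.
Proof. destruct x; unfold inv_letter; simpl; rewrite negb_involutive; reflexivity. Qed.

Lemma winv_app (a b : word) : winv (a ++ b) = winv b ++ winv a.
Proof. unfold winv; rewrite map_app, rev_app_distr; reflexivity. Qed.

Lemma winv_involutive (a : word) : winv (winv a) = a.
Proof.
  unfold winv; rewrite map_rev, rev_involutive, map_map.
  rewrite (map_ext _ (fun x => x)); [apply map_id | intro; apply inv_letter_involutive].
Qed.

(** Free reduction *)

Definition push (x : letter) (r : word) : word :=
  match r with
  | y :: r' => if letter_eqb y (inv_letter x) then r' else x :: y :: r'
  | [] => [x]
  end.

Lemma red_cons (x : letter) (w : word) : red (x :: w) = push x (red w).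
Proof. simpl; destruct (red w); reflexivity. Qed.

Fixpoint reduced (w : word) : Prop :=
  match w with
  | x :: ((y :: _) as t) => y <> inv_letter x /\ reduced t
  | _ => True
  end.

Lemma reduced_push (x : letter) (r : word) : reduced r -> reduced (push x r).
Proof.
  intros H; destruct r as [|y r']; simpl; auto.
  destruct (letter_eqbP y (inv_letter x)).
  - destruct r'; simpl in *; tauto.
  - simpl; split; auto.
Qed.

Lemma reduced_red (w : word) : reduced (red w).
Proof. induction w; [simpl; auto|]. rewrite red_cons; apply reduced_push; auto. Qed.

Lemma red_reduced (r : word) : reduced r -> red r = r.
Proof.
  induction r as [|x r IH]; intros H; auto.
  rewrite red_cons; destruct r as [|y r']; auto.
  destruct H as [Hxy Hr]; rewrite IH by auto; simpl.
  destruct (letter_eqbP y (inv_letter x)); congruence.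
Qed.

Lemma red_idempotent (w : word) : red (red w) = red w.
Proof. apply red_reduced, reduced_red. Qed.

Lemma push_inv_cancel (x : letter) (r : word) :
  reduced r -> push x (push (inv_letter x) r) = r.
Proof.
  intros H; destruct r as [|y r']; simpl.
  - destruct (letter_eqbP (inv_letter x) (inv_letter x)); congruence.
  - rewrite inv_letter_involutive; destruct (letter_eqbP y x).
    + subst; destruct r' as [|z r'']; simpl; auto.
      destruct H as [Hzx _].
      destruct (letter_eqbP z (inv_letter x)); congruence.
    + simpl; destruct (letter_eqbP (inv_letter x) (inv_letter x)); congruence.
Qed.

Definition push_all (a r : word) : word := fold_right push r a.

Lemma red_app_push_all (a b : word) : red (a ++ b) = push_all a (red b).
Proof.
  induction a as [|x a IH]; [reflexivity|].
  change ((x :: a) ++ b) with (x :: (a ++ b)); rewrite red_cons, IH; reflexivity.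
Qed.

Lemma reduced_push_all (a r : word) : reduced r -> reduced (push_all a r).
Proof. induction a; simpl; auto. intros; apply reduced_push; auto. Qed.

Lemma push_all_red (a r : word) : reduced r -> push_all (red a) r = push_all a r.
Proof.
  intros H; induction a as [|x a IH]; [reflexivity|].
  change (push_all (x :: a) r) with (push x (push_all a r)).
  rewrite red_cons, <- IH.
  destruct (red a) as [|y t]; simpl; auto.
  destruct (letter_eqbP y (inv_letter x)); [|reflexivity].
  subst; simpl; rewrite push_inv_cancel; auto. apply reduced_push_all; auto.
Qed.

Lemma red_app_cong (a a' b b' : word) :
  red a = red a' -> red b = red b' -> red (a ++ b) = red (a' ++ b').
Proof.
  intros Ha Hb; rewrite !red_app_push_all, Hb.
  rewrite <- (push_all_red a), <- (push_all_red a'), Ha by apply reduced_red.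
  reflexivity.
Qed.

Lemma red_app_red_r (a b : word) : red (a ++ b) = red (a ++ red b).
Proof. apply red_app_cong; [reflexivity | symmetry; apply red_idempotent]. Qed.

Lemma red_app_red_l (a b : word) : red (a ++ b) = red (red a ++ b).
Proof. apply red_app_cong; [symmetry; apply red_idempotent | reflexivity]. Qed.

Lemma red_trivial_r (a b : word) : red b = [] -> red (a ++ b) = red a.
Proof. intros H; rewrite red_app_red_r, H, app_nil_r; reflexivity. Qed.

Lemma red_trivial_l (a b : word) : red a = [] -> red (a ++ b) = red b.
Proof. intros H; rewrite red_app_red_l, H; reflexivity. Qed.

Lemma red_winv_r (w : word) : red (w ++ winv w) = [].
Proof.
  induction w as [|x w IH]; auto.
  change (winv (x :: w)) with (winv w ++ [inv_letter x]); simpl app.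
  rewrite red_cons, app_assoc, red_trivial_l by auto; simpl.
  destruct (letter_eqbP (inv_letter x) (inv_letter x)); congruence.
Qed.

Lemma red_winv_l (w : word) : red (winv w ++ w) = [].
Proof. rewrite <- (winv_involutive w) at 2; apply red_winv_r. Qed.

Lemma red_cancel_l (g b : word) : red (winv g ++ g ++ b) = red b.
Proof. rewrite app_assoc; apply red_trivial_l, red_winv_l. Qed.

Lemma red_cancel_r (g b : word) : red (g ++ winv g ++ b) = red b.
Proof. rewrite app_assoc; apply red_trivial_l, red_winv_r. Qed.

Lemma red_winv_cong (a b : word) : red a = red b -> red (winv a) = red (winv b).
Proof.
  intros H.
  rewrite <- (red_trivial_r (winv a) (b ++ winv b)) by apply red_winv_r.
  rewrite app_assoc, red_trivial_l; auto.
  rewrite red_app_red_r, <- H, <- red_app_red_r; apply red_winv_l.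
Qed.

(** Endomorphisms given by the images of the basis *)

Definition letter_image (phi : nat -> word) (x : letter) : word :=
  if snd x then phi (fst x) else winv (phi (fst x)).

Lemma apply_endo_cons (phi : nat -> word) (x : letter) (w : word) :
  apply_endo phi (x :: w) = letter_image phi x ++ apply_endo phi w.
Proof. reflexivity. Qed.

Lemma apply_endo_app (phi : nat -> word) (a b : word) :
  apply_endo phi (a ++ b) = apply_endo phi a ++ apply_endo phi b.
Proof. unfold apply_endo; apply flat_map_app. Qed.

Lemma apply_endo_generator (phi : nat -> word) (i : nat) :
  apply_endo phi [(i, true)] = phi i.
Proof. unfold apply_endo; simpl; apply app_nil_r. Qed.

Lemma letter_image_inv (phi : nat -> word) (x : letter) :
  letter_image phi (inv_letter x) = winv (letter_image phi x).
Proof. destruct x as [i []]; unfold letter_image; simpl; rewrite ?winv_involutive; reflexivity. Qed.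

Lemma apply_endo_winv (phi : nat -> word) (w : word) :
  apply_endo phi (winv w) = winv (apply_endo phi w).
Proof.
  induction w as [|x w IH]; auto.
  change (winv (x :: w)) with (winv w ++ [inv_letter x]).
  rewrite apply_endo_app, IH, !apply_endo_cons, winv_app; simpl.
  rewrite app_nil_r, letter_image_inv; reflexivity.
Qed.

Lemma apply_endo_red (phi : nat -> word) (w : word) :
  red (apply_endo phi w) = red (apply_endo phi (red w)).
Proof.
  induction w as [|x w IH]; auto.
  rewrite red_cons, apply_endo_cons, red_app_red_r, IH, <- red_app_red_r.
  destruct (red w) as [|y t]; simpl push; [reflexivity|].
  destruct (letter_eqbP y (inv_letter x)); [|reflexivity].
  subst; rewrite apply_endo_cons, letter_image_inv; apply red_cancel_r.
Qed.

Lemma apply_endo_cong (phi : nat -> word) (a b : word) :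
  red a = red b -> red (apply_endo phi a) = red (apply_endo phi b).
Proof. intros H; rewrite apply_endo_red, H, <- apply_endo_red; reflexivity. Qed.

Lemma apply_endo_comp (phi psi : nat -> word) (w : word) :
  apply_endo psi (apply_endo phi w) = apply_endo (fun i => apply_endo psi (phi i)) w.
Proof.
  induction w as [|x w IH]; auto.
  rewrite !apply_endo_cons, apply_endo_app, IH; f_equal.
  unfold letter_image; destruct (snd x); auto; apply apply_endo_winv.
Qed.

Lemma apply_endo_id (w : word) : apply_endo (fun i => [(i, true)]) w = w.
Proof. induction w as [|[i []] w IH]; auto; rewrite apply_endo_cons, IH; reflexivity. Qed.

Lemma valid_app (N : nat) (a b : word) : valid N a -> valid N b -> valid N (a ++ b).
Proof. intros Ha Hb x Hx; apply in_app_or in Hx; destruct Hx; auto. Qed.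

Lemma valid_winv (N : nat) (a : word) : valid N a -> valid N (winv a).
Proof.
  unfold valid, winv; intros H x Hx.
  apply in_rev in Hx; apply in_map_iff in Hx; destruct Hx as [y [<- Hy]]; simpl; apply H; auto.
Qed.

Lemma valid_generator (N i : nat) : (i < N)%nat -> valid N [(i, true)].
Proof. intros H x [<- | []]; auto. Qed.

Lemma valid_apply_endo (N : nat) (phi : nat -> word) (w : word) :
  endo N phi -> valid N w -> valid N (apply_endo phi w).
Proof.
  intros Hphi Hw x Hx; unfold apply_endo in Hx; apply in_flat_map in Hx.
  destruct Hx as [y [Hy Hx]]; specialize (Hphi _ (Hw _ Hy)).
  destruct (snd y); auto; apply valid_winv in Hphi; auto.
Qed.

Lemma apply_endo_ext (N : nat) (phi psi : nat -> word) (w : word) :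
  (forall i, (i < N)%nat -> red (phi i) = red (psi i)) -> valid N w ->
  red (apply_endo phi w) = red (apply_endo psi w).
Proof.
  intros H; induction w as [|x w IH]; intros Hw; auto.
  rewrite !apply_endo_cons; apply red_app_cong.
  - assert (Hx : (fst x < N)%nat) by (apply Hw; left; auto).
    unfold letter_image; destruct (snd x); auto; apply red_winv_cong; auto.
  - apply IH; intros y Hy; apply Hw; right; auto.
Qed.

(** Automorphisms *)

Section Automorphisms.

Variable N : nat.

Lemma left_inverse_on_words (phi psi : nat -> word) (w : word) :
  (forall i, (i < N)%nat -> red (apply_endo psi (phi i)) = [(i, true)]) -> valid N w ->
  red (apply_endo psi (apply_endo phi w)) = red w.
Proof.
  intros H Hw; rewrite apply_endo_comp.
  rewrite (apply_endo_ext N _ (fun i => [(i, true)])), apply_endo_id; auto.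
Qed.

Lemma is_aut_inverse (phi : nat -> word) :
  is_aut N phi -> exists psi, is_aut N psi /\
    (forall w, valid N w -> red (apply_endo psi (apply_endo phi w)) = red w) /\
    (forall w, valid N w -> red (apply_endo phi (apply_endo psi w)) = red w).
Proof.
  intros [Hphi [psi [Hpsi [H1 H2]]]]; exists psi; split; [|split].
  - split; auto; exists phi; auto.
  - intros; eapply left_inverse_on_words; eauto.
  - intros; eapply left_inverse_on_words; eauto.
Qed.

Lemma is_aut_comp (phi psi : nat -> word) :
  is_aut N phi -> is_aut N psi -> is_aut N (fun i => apply_endo phi (psi i)).
Proof.
  intros Hphi Hpsi.
  destruct (is_aut_inverse phi Hphi) as [phi' [[Ephi' _] [Kphi Kphi']]].
  destruct (is_aut_inverse psi Hpsi) as [psi' [[Epsi' _] [Kpsi Kpsi']]].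
  destruct Hphi as [Ephi _]; destruct Hpsi as [Epsi _].
  split; [intros i Hi; apply valid_apply_endo; auto|].
  exists (fun i => apply_endo psi' (phi' i)); split; [|split].
  - intros i Hi; apply valid_apply_endo; auto.
  - intros i Hi; rewrite <- apply_endo_comp.
    rewrite (apply_endo_cong _ _ (psi i)) by (apply Kphi, Epsi; auto).
    rewrite <- (apply_endo_generator psi i), Kpsi by (apply valid_generator; auto).
    reflexivity.
  - intros i Hi; rewrite <- apply_endo_comp.
    rewrite (apply_endo_cong _ _ (phi' i)) by (apply Kpsi', Ephi'; auto).
    rewrite <- (apply_endo_generator phi' i), Kphi' by (apply valid_generator; auto).
    reflexivity.
Qed.

Definition inner (g : word) : nat -> word := fun i => g ++ [(i, true)] ++ winv g.

Lemma letter_image_inner (g : word) (x : letter) :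
  letter_image (inner g) x = g ++ [x] ++ winv g.
Proof.
  destruct x as [i []]; unfold letter_image, inner; cbn [fst snd]; [reflexivity|].
  rewrite !winv_app, winv_involutive, <- app_assoc; reflexivity.
Qed.

Lemma apply_inner (g w : word) : red (apply_endo (inner g) w) = red (g ++ w ++ winv g).
Proof.
  induction w as [|x w IH]; [symmetry; apply red_winv_r|].
  rewrite apply_endo_cons.
  rewrite (red_app_cong _ (g ++ [x] ++ winv g) _ (g ++ w ++ winv g)); auto.
  - rewrite <- !app_assoc; apply red_app_cong; auto.
    change ((x :: w) ++ winv g) with ([x] ++ (w ++ winv g)).
    apply red_app_cong; auto; apply red_cancel_l.
  - rewrite letter_image_inner; reflexivity.
Qed.

Lemma is_aut_inner (g : word) : valid N g -> is_aut N (inner g).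
Proof.
  intros Hg.
  assert (E : forall h, valid N h -> endo N (inner h)).
  { intros h Hh i Hi; unfold inner.
    repeat apply valid_app; auto using valid_winv, valid_generator. }
  split; auto; exists (inner (winv g)); split; [|split]; auto using valid_winv;
    intros i Hi; rewrite apply_inner; unfold inner; rewrite winv_involutive, <- !app_assoc.
  - rewrite red_cancel_l, red_trivial_r by apply red_winv_l; reflexivity.
  - rewrite red_cancel_r, red_trivial_r by apply red_winv_r; reflexivity.
Qed.

Lemma conjugate_sym (a b : word) : conjugate N a b -> conjugate N b a.
Proof.
  intros [g [Hg H]]; exists (winv g); split; auto using valid_winv.
  rewrite winv_involutive.
  transitivity (red (winv g ++ (g ++ a ++ winv g) ++ g)).
  - apply red_app_cong; auto; apply red_app_cong; auto.
  - rewrite <- !app_assoc, red_cancel_l; apply red_trivial_r, red_winv_l.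
Qed.

Lemma conjugate_trans (a b c : word) :
  conjugate N a b -> conjugate N b c -> conjugate N a c.
Proof.
  intros [g [Hg H1]] [h [Hh H2]]; exists (h ++ g); split; auto using valid_app.
  rewrite <- H2, winv_app, <- !app_assoc; apply red_app_cong; auto.
  transitivity (red ((g ++ a ++ winv g) ++ winv h)).
  - rewrite <- !app_assoc; reflexivity.
  - apply red_app_cong; auto.
Qed.

Lemma conjugate_red_l (a a' b : word) :
  red a = red a' -> conjugate N a b -> conjugate N a' b.
Proof.
  intros E [g [Hg H]]; exists g; split; auto; rewrite <- H.
  apply red_app_cong; auto; apply red_app_cong; auto.
Qed.

Lemma conjugate_red_r (a b b' : word) :
  red b = red b' -> conjugate N a b -> conjugate N a b'.
Proof. intros E [g [Hg H]]; exists g; split; auto; congruence. Qed.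

Lemma conjugate_apply_endo (phi : nat -> word) (a b : word) :
  endo N phi -> conjugate N a b -> conjugate N (apply_endo phi a) (apply_endo phi b).
Proof.
  intros Ephi [g [Hg H]]; exists (apply_endo phi g); split; auto using valid_apply_endo.
  rewrite <- apply_endo_winv, <- !apply_endo_app; apply apply_endo_cong; auto.
Qed.

Lemma orbit_aut_image (u v s u' : word) :
  valid N u -> in_orbit N v u -> conjugate N v s -> in_orbit N u' u ->
  exists theta, is_aut N theta /\ conjugate N (apply_endo theta s) u'.
Proof.
  intros Hu [_ [f [Hf Hvf]]] Hvs [_ [f' [Hf' Hu'f']]].
  destruct (is_aut_inverse f Hf) as [g [Hg [Kg _]]].
  exists (fun i => apply_endo f' (g i)); split; [apply is_aut_comp; auto|].
  rewrite <- apply_endo_comp.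
  apply conjugate_trans with (apply_endo f' u); [|apply conjugate_sym; auto].
  assert (Eg : endo N g) by apply Hg; assert (Ef' : endo N f') by apply Hf'.
  apply conjugate_apply_endo; auto.
  apply conjugate_red_r with (apply_endo g (apply_endo f u)); [apply Kg; auto|].
  apply conjugate_apply_endo; auto.
  apply conjugate_trans with v; [apply conjugate_sym|]; auto.
Qed.

Lemma absorb_conjugator (theta : nat -> word) (s w : word) :
  is_aut N theta -> conjugate N (apply_endo theta s) w ->
  exists theta', is_aut N theta' /\ red (apply_endo theta' s) = red w.
Proof.
  intros Htheta [g [Hg Hgw]].
  exists (fun i => apply_endo (inner g) (theta i)); split.
  - apply is_aut_comp; auto; apply is_aut_inner; auto.
  - rewrite <- apply_endo_comp, apply_inner; auto.
Qed.

Lemma nontrivial_aut_image (theta : nat -> word) (s w : word) :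
  is_aut N theta -> valid N s -> nontrivial s ->
  red (apply_endo theta s) = red w -> nontrivial w.
Proof.
  intros Htheta Hs Hns E Hw.
  destruct (is_aut_inverse theta Htheta) as [psi [_ [Kpsi _]]].
  apply Hns; rewrite <- (Kpsi s Hs), (apply_endo_cong psi _ w E), apply_endo_red, Hw.
  reflexivity.
Qed.

End Automorphisms.

Lemma cyc_len_red (a b : word) : red a = red b -> cyc_len a = cyc_len b.
Proof. intros H; unfold cyc_len, cyc_reduce; rewrite H; reflexivity. Qed.

(* A length ratio of at least lambda > 1 forces a strictly longer numerator
   (when the denominator vanishes the ratio is 0 by convention). *)
Lemma ratio_large_len_lt (a b : word) (lam : R) :
  1 < lam -> ratio a b >= lam -> (cyc_len b < cyc_len a)%nat.
Proof.
  unfold ratio; intros Hlam Hr.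
  destruct (Nat.eq_dec (cyc_len b) 0) as [Z | Z].
  - rewrite Z in Hr; change (INR 0) with 0 in Hr.
    unfold Rdiv in Hr; rewrite Rinv_0, Rmult_0_r in Hr; lra.
  - assert (Hb : 0 < INR (cyc_len b)) by (apply lt_0_INR; lia).
    apply INR_lt.
    assert (Ha : INR (cyc_len a) = INR (cyc_len a) / INR (cyc_len b) * INR (cyc_len b))
      by (field; lra).
    nra.
Qed.

(* An Out-minimal automorphic image of a member of a minimizing set S has its
   class in S: otherwise it would be longer by a factor >= lambda > 1 than
   the member, against minimality. *)
Lemma minimal_image_class_in (N M : nat) (lam eps : R) (S : list word)
    (s : word) (theta : nat -> word) (w : word) :
  1 < lam -> minimizing N M lam eps S -> In s S -> is_aut N theta ->
  red (apply_endo theta s) = red w -> out_minimal N w -> class_in N w S.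
Proof.
  intros Hlam [_ [HSvalid [_ [_ HSgap]]]] Hs Htheta E Hw.
  destruct (HSvalid s Hs) as [Vs _].
  destruct (classic (class_in N (apply_endo theta s) S)) as [[s' [Hs' C]] | C].
  - exists s'; split; auto; eapply conjugate_red_l; eauto.
  - exfalso.
    destruct (is_aut_inverse N theta Htheta) as [psi [Hpsi [Kpsi _]]].
    pose proof (ratio_large_len_lt _ _ _ Hlam (HSgap s theta Hs Htheta C)) as Hlong.
    assert (Hback : red (apply_endo psi w) = red s).
    { rewrite <- (Kpsi s Vs); apply apply_endo_cong; symmetry; exact E. }
    specialize (Hw psi Hpsi).
    rewrite (cyc_len_red _ _ E) in Hlong; rewrite (cyc_len_red _ _ Hback) in Hw.
    lia.
Qed.

Theorem mainTheorem4 (N M : nat) (lam eps : R) (u : word) :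
  (2 <= N)%nat -> (1 <= M)%nat -> 1 < lam -> 0 <= eps -> eps < lam - 1 ->
  valid N u -> nontrivial u ->
  (exists v, in_orbit N v u /\ MLE_minimal N M lam eps v) ->
  forall u', in_orbit N u' u -> out_minimal N u' ->
    MLE_minimal N M lam eps u'.
Proof.
  intros _ _ Hlam _ _ Hu _ [v [Hv [_ [S [HS [s [Hs Hvs]]]]]]] u' Hu' Hmin.
  destruct (orbit_aut_image N u v s u' Hu Hv Hvs Hu') as [theta [Htheta Hconj]].
  destruct (absorb_conjugator N theta s u' Htheta Hconj) as [theta' [Htheta' E]].
  destruct (proj1 (proj2 HS) s Hs) as [Vs Ns].
  split.
  - exact (nontrivial_aut_image N theta' s u' Htheta' Vs Ns E).
  - exists S; split; auto.
    exact (minimal_image_class_in N M lam eps S s theta' u' Hlam HS Hs Htheta' E Hmin).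
Qed.
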